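(* Let $\overrightarrow{W}$ and $\overrightarrow{W}'$ be two Morse sequences on the same simplicial complex $K$, with reference maps $\curlywedge,\curlywedge'$ and coreference maps $\curlyvee,\curlyvee'$ respectively. If $\overrightarrow{W}$ and $\overrightarrow{W}'$ are equivalent, then $\curlywedge=\curlywedge'$ and $\curlyvee=\curlyvee'$.
   Context: A simplicial complex $K$ is a finite collection of non-empty finite sets closed under taking non-empty subsets; $\dim\sigma=|\sigma|-1$, $K^{(p)}$ the set of $p$-simplices. A pair $(\sigma,\tau)$ with $\sigma\subsetneq\tau$ is a free pair for $K$ if $\tau$ is the only simplex other than $\sigma$ containing $\sigma$; $K$ is then an elementary expansion of $K\setminus\{\sigma,\tau\}$. If $\nu$ is a facet (maximal simplex) of $K$, $K$ is an elementary filling of $K\setminus\{\nu\}$. A Morse sequence on $K$ is a sequence $\langle\emptyset=K_0,\dots,K_k=K\rangle$ with each $K_i$ an elementary expansion or filling of $K_{i-1}$; simplices added by fillings are critical; for an expansion $K_i=K_{i-1}\cup\{\sigma,\tau\}$, $\sigma\subset\tau$, $(\sigma,\tau)$ is a regular pair, $\sigma$ lower regular, $\tau$ upper regular. The gradient vector field of a Morse sequence is the set of its regular pairs; two Morse sequences on $K$ are equivalent if they have the same gradient vector field. $K[p]$ is the $\mathbb{Z}_2$-vector space of subsets of $K^{(p)}$ (sum = symmetric difference, $0=\emptyset$); $\partial(\sigma)=\{\tau\in K^{(p-1)}:\tau\subset\sigma\}$, $\delta(\sigma)=\{\tau\in K^{(p+1)}:\sigma\subset\tau\}$. The reference map $\curlywedge$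 of a Morse sequence is the unique map assigning to each $p$-simplex a set of critical $p$-simplices, extended linearly (mod 2) to chains, with $\curlywedge(\nu)=\{\nu\}$ for critical $\nu$ and $\curlywedge(\tau)=0=\curlywedge(\partial(\tau))$ for upper regular $\tau$; the coreference map $\curlyvee$ is the unique such map with $\curlyvee(\nu)=\{\nu\}$ for critical $\nu$ and $\curlyvee(\sigma)=0=\curlyvee(\delta(\sigma))$ for lower regular $\sigma$. *)

From mathcomp Require Import all_boot.
Set Implicit Arguments. Unset Strict Implicit. Unset Printing Implicit Defensive.

Section Morse.
Variable V : finType.

(* A simplex is a nonempty finite set of vertices; dim s = #|s| - 1. *)
Definition is_complex (K : {set {set V}}) : Prop :=
  set0 \notin K /\
  forall s t : {set V}, s \in K -> t \subset s -> t != set0 -> t \in K.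

Inductive step : Type :=
| Fill of {set V}
| Expand of {set V} & {set V}.

Definition added (st : step) : {set {set V}} :=
  match st with
  | Fill nu => [set nu]
  | Expand s t => [set s; t]
  end.

Definition step_ok (L : {set {set V}}) (st : step) : Prop :=
  match st with
  | Fill nu =>
      let L' := nu |: L in
      is_complex L' /\ nu \notin L /\
      (forall u : {set V}, u \in L' -> nu \subset u -> u = nu)
  | Expand s t =>
      let L' := s |: (t |: L) in
      is_complex L' /\ s \notin L /\ t \notin L /\ s \proper t /\
      (forall u : {set V}, u \in L' -> s \subset u -> u = s \/ u = t)
  end.

Fixpoint valid_from (L : {set {set V}}) (w : seq step) : Prop :=
  match w with
  | [::] => True
  | st :: w' => step_ok L st /\ valid_from (L :|: added st) w'
  end.

Fixpoint build_from (L : {set {set V}}) (w : seq step) : {set {set V}} :=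
  match w with
  | [::] => L
  | st :: w' => build_from (L :|: added st) w'
  end.

Definition is_morse_seq (K : {set {set V}}) (w : seq step) : Prop :=
  valid_from set0 w /\ build_from set0 w = K.

Definition pairs (w : seq step) : seq ({set V} * {set V}) :=
  pmap (fun st => if st is Expand s t then Some (s, t) else None) w.
Definition fills (w : seq step) : seq {set V} :=
  pmap (fun st => if st is Fill nu then Some nu else None) w.

Definition gvf (w : seq step) : {set {set V} * {set V}} := [set p in pairs w].
Definition crit (w : seq step) : {set {set V}} := [set nu in fills w].
Definition lower_reg (w : seq step) : {set {set V}} := [set p.1 | p in gvf w].
Definition upper_reg (w : seq step) : {set {set V}} := [set p.2 | p in gvf w].

(* K^(p) restricted to simplices with #|s| = n *)
Definition skel (K : {set {set V}}) (n : nat) : {set {set V}} :=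
  [set s in K | #|s| == n].
(* boundary and coboundary (as Z_2-chains, i.e. sets of simplices) *)
Definition bd (K : {set {set V}}) (s : {set V}) : {set {set V}} :=
  [set t in K | (t \subset s) && (#|t| == #|s|.-1)].
Definition cbd (K : {set {set V}}) (s : {set V}) : {set {set V}} :=
  [set t in K | (s \subset t) && (#|t| == #|s|.+1)].

(* mod-2 linear extension of a map on simplices to chains *)
Definition ext (f : {set V} -> {set {set V}}) (c : {set {set V}}) : {set {set V}} :=
  [set x | odd #|[set s in c | x \in f s]|].

Definition is_reference (K : {set {set V}}) (w : seq step)
  (f : {set V} -> {set {set V}}) : Prop :=
  (forall s : {set V}, s \in K -> f s \subset skel (crit w) #|s|) /\
  (forall nu, nu \in crit w -> f nu = [set nu]) /\
  (forall tau, tau \in upper_reg w -> f tau = set0 /\ ext f (bd K tau) = set0).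

Definition is_coreference (K : {set {set V}}) (w : seq step)
  (g : {set V} -> {set {set V}}) : Prop :=
  (forall s : {set V}, s \in K -> g s \subset skel (crit w) #|s|) /\
  (forall nu, nu \in crit w -> g nu = [set nu]) /\
  (forall sg, sg \in lower_reg w -> g sg = set0 /\ ext g (cbd K sg) = set0).

End Morse.

From HB Require Import structures.
From mathcomp Require Import all_boot zify.
Set Implicit Arguments. Unset Strict Implicit. Unset Printing Implicit Defensive.

(* Equivalent Morse sequences have the same critical simplices, so the
   conditions defining the (co)reference map only depend on the gradient vector
   field, and it suffices to show that they determine the map.  Run through a
   Morse sequence forward: a filling adds a critical simplex, whose reference is
   itself, and an expansion (s, t) adds t, sent to 0, and its free face s, whose
   reference is forced by [ext f (bd K t) = 0] because the other faces of t were
   added before.  Dually, run through it backward: the coreference of t is forced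
   by [ext g (cbd K s) = 0] because s is free, so the other cofaces of s are
   added afterwards. *)

Definition step_enc (V : finType) (st : step V) : {set V} + ({set V} * {set V}) :=
  match st with Fill nu => inl nu | Expand s t => inr (s, t) end.
Definition step_dec (V : finType) (x : {set V} + ({set V} * {set V})) : step V :=
  match x with inl nu => Fill nu | inr (s, t) => Expand s t end.
Lemma step_encK (V : finType) : cancel (@step_enc V) (@step_dec V).
Proof. by case. Qed.
HB.instance Definition _ (V : finType) := Equality.copy (step V) (can_type (@step_encK V)).

Section MorseSequences.
Variable V : finType.
Implicit Types (L K c : {set {set V}}) (w : seq (step V)) (s t x : {set V}).
Implicit Types (f : {set V} -> {set {set V}}).

Lemma mem_build L w x :
  (x \in build_from L w) = (x \in L) || has (fun st => x \in added st) w.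
Proof. by elim: w L => [|st w IH] L /=; rewrite ?orbF // IH inE orbA. Qed.

Lemma valid_added_notin L w st x :
  valid_from L w -> st \in w -> x \in added st -> x \notin L.
Proof.
elim: w L => [|st0 w IH] L //= [ok valid]; rewrite inE => /predU1P[-> | stw] xst.
  case: st0 ok xst {valid} => [nu [_ [nuL _]] | s t [_ [sL [tL _]]]] /=.
    by rewrite inE => /eqP ->.
  by rewrite !inE => /orP[] /eqP ->.
by have := IH _ valid stw xst; rewrite inE negb_or => /andP[].
Qed.

Lemma valid_added_uniq L w st1 st2 x : valid_from L w ->
  st1 \in w -> st2 \in w -> x \in added st1 -> x \in added st2 -> st1 = st2.
Proof.
elim: w L => [|st0 w IH] L //= [_ valid].
rewrite !inE => /predU1P[-> | st1w] /predU1P[-> | st2w] // x1 x2.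
- by have := valid_added_notin valid st2w x2; rewrite inE x1 orbT.
- by have := valid_added_notin valid st1w x1; rewrite inE x2 orbT.
- exact: IH valid st1w st2w x1 x2.
Qed.

Lemma mem_crit w nu : (nu \in crit w) = (Fill nu \in w).
Proof.
rewrite inE mem_pmap; apply/mapP/idP => [[[nu' | //] stw [->]] // | nuw].
by exists (Fill nu).
Qed.

Lemma mem_gvf w s t : ((s, t) \in gvf w) = (Expand s t \in w).
Proof.
rewrite inE mem_pmap; apply/mapP/idP => [[[// | s' t'] stw [-> ->]] // | stw].
by exists (Expand s t).
Qed.

Lemma crit_sub_gvf K w w' : is_morse_seq K w -> is_morse_seq K w' ->
  gvf w = gvf w' -> crit w \subset crit w'.
Proof.
move=> [valid buildK] [_ buildK'] gvf_eq; apply/subsetP => nu.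
rewrite mem_crit => nuw.
have : nu \in K by rewrite -buildK mem_build in_set0; apply/hasP; exists (Fill nu); rewrite ?inE.
rewrite -buildK' mem_build in_set0 => /hasP[[nu' | s t] stw' /=].
  by rewrite inE => /eqP ->; rewrite mem_crit.
move=> nu_st; have stw : Expand s t \in w by rewrite -mem_gvf gvf_eq mem_gvf.
by have := valid_added_uniq valid nuw stw (set11 nu) nu_st.
Qed.

Lemma crit_eq_gvf K w w' : is_morse_seq K w -> is_morse_seq K w' ->
  gvf w = gvf w' -> crit w = crit w'.
Proof.
move=> Mw Mw' gvf_eq; apply/eqP.
by rewrite eqEsubset (crit_sub_gvf Mw Mw' gvf_eq) (crit_sub_gvf Mw' Mw (esym gvf_eq)).
Qed.

Section FreePair.
Variables (K L : {set {set V}}) (s t : {set V}).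
Hypothesis expand_ok : step_ok L (Expand s t).

Lemma expand_lower_neq0 : s != set0.
Proof. by case: expand_ok => [[L0 _] _]; apply: contraNneq L0 => <-; rewrite !inE eqxx. Qed.

Lemma expand_card : #|t| = #|s|.+1.
Proof.
case: expand_ok => [[_ Lclosed] [_ [_ [/properP[st [v vt vs]] free]]]].
have s_sub : s \subset t :\ v.
  by apply/subsetP => x xs; rewrite !inE (subsetP st) // andbT; apply: contraNneq vs => <-.
have tv_in : t :\ v \in s |: (t |: L).
  apply: Lclosed (subsetDl _ _) _; first by rewrite !inE eqxx orbT.
  by apply: contraNneq expand_lower_neq0 => tv0; rewrite -subset0 -tv0.
case: (free _ tv_in s_sub) => [tvs | tvt]; first by rewrite (cardsD1 v t) vt tvs.
by move: vt; rewrite -{1}tvt !inE eqxx.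
Qed.

Lemma expand_in_bd : s \in K -> s \in bd K t.
Proof.
case: expand_ok => [_ [_ [_ [/proper_sub st _]]]] sK.
by rewrite inE sK st expand_card /=.
Qed.

Lemma expand_in_cbd : t \in K -> t \in cbd K s.
Proof.
case: expand_ok => [_ [_ [_ [/proper_sub st _]]]] tK.
by rewrite inE tK st expand_card /=.
Qed.

Lemma expand_bd : {subset bd K t :\ s <= L}.
Proof.
have tcard := expand_card.
case: expand_ok => [[_ Lclosed] _] u; rewrite !inE => /and4P[us _ ut /eqP ucard].
have u_n0 : u != set0 by rewrite -card_gt0 ucard tcard card_gt0 expand_lower_neq0.
have := Lclosed t u; rewrite !inE eqxx orbT (negbTE us) => /(_ isT ut u_n0) /=.
by case/orP => // /eqP ut_eq; move: ucard; rewrite ut_eq; lia.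
Qed.

Lemma expand_cbd : {subset cbd K s :\ t <= K :\: (L :|: [set s; t])}.
Proof.
have tcard := expand_card.
case: expand_ok => [_ [_ [_ [_ free]]]] u; rewrite !inE => /and4P[ut uK su /eqP ucard].
rewrite uK andbT; apply/negP => uL.
have uL' : u \in s |: (t |: L) by move: uL; rewrite !inE; case/or3P => ->; rewrite ?orbT.
have [us | /eqP] := free u uL' su.
  by move: ucard; rewrite us; lia.
by rewrite (negbTE ut).
Qed.

End FreePair.

Section OneSequence.
Variables (K : {set {set V}}) (w : seq (step V)).
Hypothesis w_morse : is_morse_seq K w.

Lemma mem_added_morse st x : st \in w -> x \in added st -> x \in K.
Proof.
by case: w_morse => _ <- stw xst; rewrite mem_build; apply/orP; right; apply/hasP; exists st.
Qed.

Lemma morse_ind_fwd (P : {set {set V}} -> Prop) : P set0 ->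
  (forall L st, st \in w -> step_ok L st -> P L -> P (L :|: added st)) -> P K.
Proof.
case: w_morse => valid <- P0 Pstep.
suff: forall w0 L, valid_from L w0 -> {subset w0 <= w} -> P L -> P (build_from L w0).
  by apply.
elim=> [|st w0 IH] L //= [ok valid0] w0w PL.
have stw : st \in w by apply: w0w; rewrite inE eqxx.
by apply: IH valid0 _ (Pstep _ _ stw ok PL) => x xw0; apply: w0w; rewrite inE xw0 orbT.
Qed.

Lemma morse_ind_bwd (P : {set {set V}} -> Prop) : P K ->
  (forall L st, st \in w -> step_ok L st -> P (L :|: added st) -> P L) -> P set0.
Proof.
case: w_morse => valid <- PK Pstep.
suff: forall w0 L, valid_from L w0 -> {subset w0 <= w} -> P (build_from L w0) -> P L.
  by apply; last exact: PK.
elim=> [|st w0 IH] L //= [ok valid0] w0w Pbuild.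
have stw : st \in w by apply: w0w; rewrite inE eqxx.
apply: Pstep stw ok _.
by apply: IH valid0 _ Pbuild => x xw0; apply: w0w; rewrite inE xw0 orbT.
Qed.

End OneSequence.

Lemma mem_ext_setU1 f c s x : s \notin c ->
  (x \in ext f (s |: c)) = (x \in f s) (+) (x \in ext f c).
Proof.
move=> sc; rewrite !inE.
have [xfs | xfs] := boolP (x \in f s).
- rewrite (_ : [set u in s |: c | x \in f u] = s |: [set u in c | x \in f u]).
    by rewrite cardsU1 inE (negbTE sc) oddD.
  by apply/setP => u; rewrite !inE; case: eqP => [-> | _].
- congr (odd _); apply: eq_card => u; rewrite !inE.
  by case: eqP => [-> | _]; rewrite ?(negbTE xfs) ?andbF.
Qed.

Lemma eq_ext f f' c : {in c, f =1 f'} -> ext f c = ext f' c.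
Proof.
move=> eq_ff'; apply/setP => x; rewrite !inE; congr (odd _).
by apply: eq_card => u; rewrite !inE; case uc: (u \in c); rewrite //= eq_ff'.
Qed.

Lemma ext_eq0_determines f f' c s : s \in c ->
  ext f c = set0 -> ext f' c = set0 -> {in c :\ s, f =1 f'} -> f s = f' s.
Proof.
move=> sc ext0 ext0' eq_ff'; rewrite -(setD1K sc) in ext0 ext0'; apply/setP => x.
move/setP/(_ x): ext0; move/setP/(_ x): ext0'.
rewrite !mem_ext_setU1 ?setD11 // (eq_ext eq_ff') in_set0.
by case: (x \in f s); case: (x \in f' s); case: (_ \in _).
Qed.

Lemma reference_uniq K w f f' : is_morse_seq K w ->
  is_reference K w f -> is_reference K w f' -> {in K, f =1 f'}.
Proof.
move=> Mw [_ [crit_f up_f]] [_ [crit_f' up_f']].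
apply: (morse_ind_fwd Mw (P := fun L => {in L, f =1 f'})) => [x | L st stw ok fL x].
  by rewrite inE.
case: st stw ok => [nu | s t] stw ok; rewrite !inE.
  by case/orP => [/fL // | /eqP ->]; rewrite crit_f ?crit_f' ?mem_crit.
have tup : t \in upper_reg w by apply/imsetP; exists (s, t); rewrite ?mem_gvf.
have [ft0 ext0] := up_f t tup; have [ft0' ext0'] := up_f' t tup.
have sK : s \in K by apply: (mem_added_morse Mw stw); rewrite !inE eqxx.
have fs : f s = f' s.
  apply: (ext_eq0_determines (expand_in_bd ok sK) ext0 ext0') => u /(expand_bd ok).
  exact: fL.
by case/or3P => [/fL | /eqP -> | /eqP ->] //; rewrite ft0 ft0'.
Qed.

Lemma coreference_uniq K w g g' : is_morse_seq K w ->
  is_coreference K w g -> is_coreference K w g' -> {in K, g =1 g'}.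
Proof.
move=> Mw [_ [crit_g lo_g]] [_ [crit_g' lo_g']].
suff: {in K :\: set0, g =1 g'} by rewrite setD0.
apply: (morse_ind_bwd Mw (P := fun L => {in K :\: L, g =1 g'})) => [x | L st stw ok gL x].
  by rewrite setDv inE.
rewrite inE => /andP[xL xK].
have [x_new | x_old] := boolP (x \in L :|: added st); last by apply: gL; rewrite inE x_old.
move: x_new; rewrite inE (negbTE xL) /=.
case: st stw ok gL => [nu | s t] stw ok gL /=.
  by rewrite inE => /eqP ->; rewrite crit_g ?crit_g' ?mem_crit.
have slo : s \in lower_reg w by apply/imsetP; exists (s, t); rewrite ?mem_gvf.
have [gs0 ext0] := lo_g s slo; have [gs0' ext0'] := lo_g' s slo.
have tK : t \in K by apply: (mem_added_morse Mw stw); rewrite !inE eqxx orbT.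
rewrite !inE => /orP[/eqP -> | /eqP ->]; first by rewrite gs0 gs0'.
apply: (ext_eq0_determines (expand_in_cbd ok tK) ext0 ext0') => u /(expand_cbd ok).
exact: gL.
Qed.

End MorseSequences.

Theorem proposition3 (V : finType) (K : {set {set V}}) (w w' : seq (step V))
  (f f' g g' : {set V} -> {set {set V}}) :
  is_complex K ->
  is_morse_seq K w -> is_morse_seq K w' ->
  is_reference K w f -> is_reference K w' f' ->
  is_coreference K w g -> is_coreference K w' g' ->
  gvf w = gvf w' ->
  (forall s, s \in K -> f s = f' s) /\ (forall s, s \in K -> g s = g' s).
Proof.
move=> _ Mw Mw' Rf Rf' Rg Rg' gvf_eq.
have crit_eq := crit_eq_gvf Mw Mw' gvf_eq.
have Rf'w : is_reference K w f' by rewrite /is_reference /upper_reg crit_eq gvf_eq.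
have Rg'w : is_coreference K w g' by rewrite /is_coreference /lower_reg crit_eq gvf_eq.
by split; [apply: reference_uniq Mw Rf Rf'w | apply: coreference_uniq Mw Rg Rg'w].
Qed.
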